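(* Let $H$ be a simple, strongly connected digraph with at least one arc, let $k$ be a positive integer, and let $c\ge 0$. Let $T$ be a tournament with $\mathrm{ctw}(T)\le c$ that does not contain $k$ pairwise vertex-disjoint immersion copies of $H$. Then there is a set $F$ of at most $2(k-1)c$ arcs of $T$ such that $T-F$ does not contain $H$ as an immersion.
   Context: A tournament is a simple digraph with exactly one arc between every pair of distinct vertices. An immersion copy of $H$ in a digraph $G$ is a subgraph $\widehat H$ of $G$ with a map sending vertices of $H$ to distinct vertices of $\widehat H$ and each arc $(u,v)$ of $H$ to a directed path from the image of $u$ to the image of $v$, such that each arc of $\widehat H$ lies on exactly one of these paths; $G$ contains $H$ as an immersion if it has such a subgraph. For an ordering $\sigma$ (bijection $V(T)\to[|V(T)|]$) and $\alpha\in\{0,\dots,|V(T)|\}$, the $\alpha$-cut is the set of arcs $(u,v)$ with $\sigma(u)>\alpha\ge\sigma(v)$; the width of $\sigma$ is the maximum size of its cuts, and the cutwidth $\mathrm{ctw}(T)$ is the minimum width of an ordering. *)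

From mathcomp Require Import all_boot.
Set Implicit Arguments. Unset Strict Implicit. Unset Printing Implicit Defensive.

(* simple digraph: no loops (parallel arcs are impossible with a relation) *)
Definition simple_digraph (V : finType) (E : rel V) : Prop := irreflexive E.

Definition strongly_connected (V : finType) (E : rel V) : Prop :=
  forall u v, connect E u v.

Definition has_arc (V : finType) (E : rel V) : Prop := exists u v, E u v.

Definition tournament (V : finType) (T : rel V) : Prop :=
  irreflexive T /\ forall u v, u != v -> T u v != T v u.

Definition arcs (V : finType) (E : rel V) : {set V * V} :=
  [set a | E a.1 a.2].

Definition del_arcs (V : finType) (E : rel V) (F : {set V * V}) : rel V :=
  fun u v => E u v && ((u, v) \notin F).

Definition dipath (V : finType) (G : rel V) (x y : V) (p : seq V) : Prop :=
  [/\ path G x p, uniq (x :: p) & last x p = y].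

Definition path_arcs (V : eqType) (x : V) (p : seq V) : seq (V * V) :=
  zip (x :: p) p.

(* An immersion copy of H in G, given by the vertex map phi and, for every
   arc (u,v) of H, the path P u v (vertices after phi u) from phi u to phi v.
   The subgraph \hat H is the union of the phi-images and these paths;
   "each arc of \hat H lies on exactly one path" = the paths are pairwise
   arc-disjoint (a single directed path never repeats an arc). *)
Definition immersion_copy (VH VG : finType) (H : rel VH) (G : rel VG)
    (phi : VH -> VG) (P : VH -> VH -> seq VG) : Prop :=
  [/\ injective phi,
      (forall u v, H u v -> dipath G (phi u) (phi v) (P u v)) &
      (forall u v u' v', H u v -> H u' v' -> (u, v) != (u', v') ->
         forall a, a \in path_arcs (phi u) (P u v) ->
                   a \notin path_arcs (phi u') (P u' v'))].

Definition copy_vertex (VH VG : finType) (H : rel VH)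
    (phi : VH -> VG) (P : VH -> VH -> seq VG) (x : VG) : Prop :=
  (exists w, phi w = x) \/ (exists u v, H u v /\ x \in P u v).

Definition contains_immersion (VH VG : finType) (H : rel VH) (G : rel VG) : Prop :=
  exists (phi : VH -> VG) (P : VH -> VH -> seq VG), immersion_copy H G phi P.

Definition k_disjoint_immersions (VH VG : finType) (k : nat)
    (H : rel VH) (G : rel VG) : Prop :=
  exists (phi : 'I_k -> VH -> VG) (P : 'I_k -> VH -> VH -> seq VG),
    (forall i, immersion_copy H G (phi i) (P i)) /\
    (forall i j, i != j -> forall x,
        ~ (copy_vertex H (phi i) (P i) x /\ copy_vertex H (phi j) (P j) x)).

(* Orderings: bijections V -> 'I_#|V|; position sigma(v) in the paper is
   (sigma v).+1 in [1, |V|]. *)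
Definition ordering (V : finType) := {ffun V -> 'I_#|V|}.

Definition cut (V : finType) (T : rel V) (s : ordering V) (alpha : nat)
    : {set V * V} :=
  [set a | [&& T a.1 a.2, alpha < (s a.1).+1 & (s a.2).+1 <= alpha]].

Definition width (V : finType) (T : rel V) (s : ordering V) : nat :=
  \max_(alpha < #|V|.+1) #|cut T s alpha|.

Definition enum_ordering (V : finType) : ordering V := [ffun x => enum_rank x].

(* cutwidth: minimum width over all orderings (the bijective ones);
   enum_ordering is bijective, so the arg min ranges over a nonempty set. *)
Definition ctw (V : finType) (T : rel V) : nat :=
  width T [arg min_(s < enum_ordering V | injectiveb s) width T s].

(* Fix an ordering s of T of width at most c and work on the suffixes
   {x | a <= s x}, by induction on the number of disjoint copies sought.  Let b
   be least such that some copy of H lies in positions [a, b].  Deleting the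
   cuts at b and b+1 (at most 2c arcs) leaves no arc from positions >= b, resp.
   >= b+1, back to earlier positions; since H is strongly connected, every
   surviving copy in the suffix then lies entirely below b, entirely at b, or
   entirely above b.  The first is excluded by the choice of b, the second
   because H has an arc and copies are injective, and the copies above b are
   killed by induction with 2(m-1)c further arcs, unless there are m-1 disjoint
   ones there, which together with the copy in [a, b] would give m. *)

From mathcomp Require Import all_boot.
From Stdlib Require Import Classical.
From mathcomp Require Import zify.

Set Implicit Arguments. Unset Strict Implicit. Unset Printing Implicit Defensive.

Lemma connect_closed (V : finType) (e : rel V) (q : pred V) :
  (forall x y, e x y -> q x -> q y) -> forall x y, connect e x y -> q x -> q y.
Proof.
move=> qe x _ /connectP[p ep ->].
elim: p x ep => //= z p IHp x /andP[exz ezp] qx; exact: IHp ezp (qe _ _ exz qx).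
Qed.

Lemma connect_last (V : finType) (e : rel V) x p y :
  path e x p -> y \in x :: p -> connect e y (last x p).
Proof.
move=> ep /splitPl; move: ep => /[swap] -[p1 p2 <-].
rewrite cat_path last_cat => /andP[_ /path_connect].
by apply; apply: mem_last.
Qed.

Lemma exists_flip (Q : nat -> Prop) n : ~ Q 0 -> Q n -> exists b, ~ Q b /\ Q b.+1.
Proof.
elim: n => [|n IHn] nQ0 Qn; first by [].
by case: (classic (Q n)) => [/IHn|]; [apply | exists n].
Qed.

Section Immersions.

Variables (VH VG : finType) (H : rel VH).

Lemma immersion_copy_subrel (G G' : rel VG) phi P :
  subrel G G' -> immersion_copy H G phi P -> immersion_copy H G' phi P.
Proof.
move=> GG' [phi_inj Pdipath Pdisj]; split=> // u v /Pdipath[Gpath uniqP lastP].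
by split=> //; apply: sub_path Gpath.
Qed.

Lemma immersion_copy_connect (G : rel VG) phi P :
  strongly_connected H -> immersion_copy H G phi P ->
  forall w x, copy_vertex H phi P x ->
    connect G (phi w) x /\ connect G x (phi w).
Proof.
move=> Hsc [_ Pdipath _].
have phi_connect u v : connect G (phi u) (phi v).
  have /connectP[p Hp ->] := Hsc u v.
  elim: p u Hp => //= z p IHp u /andP[Huz /IHp]; apply: connect_trans.
  by have [Gpath _ <-] := Pdipath u z Huz; apply: path_connect Gpath _ (mem_last _ _).
move=> w x [[w' <-]|[u [v [Huv xP]]]]; first by split.
have [Gpath _ lastP] := Pdipath u v Huv.
have xP' : x \in phi u :: P u v by rewrite inE xP orbT.
split; first exact: connect_trans (phi_connect w u) (path_connect Gpath xP').
by apply: connect_trans (phi_connect v w); rewrite -lastP; apply: connect_last Gpath xP'.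
Qed.

Definition copy_in (G : rel VG) (S : pred VG) :=
  exists phi P, immersion_copy H G phi P /\
                forall x, copy_vertex H phi P x -> S x.

Lemma copy_in_mono (G G' : rel VG) (S S' : pred VG) :
  subrel G G' -> (forall x, S x -> S' x) -> copy_in G S -> copy_in G' S'.
Proof.
move=> GG' SS' [phi [P [copyP inS]]]; exists phi, P.
by split=> [|x /inS /SS' //]; apply: immersion_copy_subrel copyP.
Qed.

Lemma copy_in_split (G : rel VG) (S q : pred VG) :
  strongly_connected H -> (forall x y, G x y -> q x -> q y) ->
  copy_in G S -> copy_in G (predI S q) \/ copy_in G (predI S (predC q)).
Proof.
move=> Hsc qG [phi [P [copyP inS]]].
have [w _|noVH] := pickP (@predT VH); last first.
  left; exists phi, P; split=> // x [[w _]|[w [_ [_ _]]]]; by have := noVH w.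
have same_side x : copy_vertex H phi P x -> q x = q (phi w).
  case/(immersion_copy_connect Hsc copyP w) => wx xw.
  by apply/idP/idP; [apply: connect_closed qG _ _ xw | apply: connect_closed qG _ _ wx].
case qw: (q (phi w)); [left | right]; exists phi, P; split=> // x xP;
  by rewrite /= inS // same_side // qw.
Qed.

Lemma copy_in_two_vertices (G : rel VG) (S : pred VG) :
  simple_digraph H -> has_arc H -> copy_in G S ->
  exists x y, [/\ x != y, S x & S y].
Proof.
move=> Hirr [u [v Huv]] [phi [P [[phi_inj _ _] inS]]].
exists (phi u), (phi v); split; try by apply: inS; left; eexists.
by rewrite (inj_eq phi_inj); apply: contraTneq Huv => ->; rewrite Hirr.
Qed.

(* Indexed by [nat] rather than ['I_m] so that a copy can be prepended. *)
Definition disjoint_copies_in (G : rel VG) (m : nat) (S : pred VG) :=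
  exists (phi : nat -> VH -> VG) (P : nat -> VH -> VH -> seq VG),
    (forall i, i < m -> immersion_copy H G (phi i) (P i) /\
                        forall x, copy_vertex H (phi i) (P i) x -> S x) /\
    (forall i j, i < m -> j < m -> i != j -> forall x,
        copy_vertex H (phi i) (P i) x -> copy_vertex H (phi j) (P j) x -> False).

Lemma disjoint_copies_in1 (G : rel VG) (S : pred VG) :
  copy_in G S -> disjoint_copies_in G 1 S.
Proof.
case=> phi [P copyP]; exists (fun=> phi), (fun=> P).
by split=> [[]|[|[]] [|[]]].
Qed.

Lemma disjoint_copies_in_cons (G : rel VG) m (S1 S2 S : pred VG) :
  (forall x, S1 x -> S2 x -> False) ->
  (forall x, S1 x -> S x) -> (forall x, S2 x -> S x) ->
  copy_in G S1 -> disjoint_copies_in G m S2 -> disjoint_copies_in G m.+1 S.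
Proof.
move=> S12 S1S S2S [phi0 [P0 [copy0 in0]]] [phi [P [copies disj]]].
exists (fun i => if i is i'.+1 then phi i' else phi0),
       (fun i => if i is i'.+1 then P i' else P0).
split=> [[|i] /= i_lt|[|i] [|j] //= i_lt j_lt ij x].
- by split=> // x /in0 /S1S.
- by have [copyi ini] := copies i i_lt; split=> // x /ini /S2S.
- by move=> /in0 /S12 + /(proj2 (copies j j_lt)).
- by move=> /(proj2 (copies i i_lt)) /[swap] /in0 /S12.
- exact: disj.
Qed.

Lemma k_disjoint_immersions_of (G : rel VG) k (S : pred VG) :
  disjoint_copies_in G k S -> k_disjoint_immersions k H G.
Proof.
case=> phi [P [copies disj]].
exists (fun i : 'I_k => phi i), (fun i : 'I_k => P i); split.
  by move=> i; case: (copies i (ltn_ord i)).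
by move=> i j ij x [xi xj]; apply: (disj i j (ltn_ord i) (ltn_ord j) ij x xi xj).
Qed.

End Immersions.

Lemma ctw_ordering (V : finType) (G : rel V) :
  exists2 s : ordering V, injective s & width G s = ctw G.
Proof.
rewrite /ctw; case: arg_minnP => [|s /injectiveP s_inj _]; last by exists s.
by apply/injectiveP => x y; rewrite !ffunE; apply: enum_rank_inj.
Qed.

Section Cuts.

Variables (V : finType) (G : rel V) (s : ordering V).

Lemma del_arcs_subrel (F : {set V * V}) : subrel (del_arcs G F) G.
Proof. by move=> x y /andP[]. Qed.

Lemma cut_subset_arcs al : cut G s al \subset arcs G.
Proof. by apply/subsetP => -[x y]; rewrite !inE => /andP[]. Qed.

Lemma card_cut_le_width al : #|cut G s al| <= width G s.
Proof.
have [al_le | al_gt] := leqP al #|V|.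
  exact: (leq_bigmax (Ordinal (al_le : al < #|V|.+1))).
suff -> : cut G s al = set0 by rewrite cards0.
apply/setP => -[x y]; rewrite !inE /=; apply/and3P => -[_ + _].
by rewrite ltnNge (leq_trans (ltn_ord (s x)) (ltnW al_gt)).
Qed.

Lemma del_cut_suffix_closed (F : {set V * V}) al :
  cut G s al \subset F ->
  forall x y, del_arcs G F x y -> al <= s x -> al <= s y.
Proof.
move=> cutF x y /andP[Gxy /negP xyF] al_le; rewrite leqNgt; apply/negP => al_gt.
by apply/xyF/(subsetP cutF); rewrite !inE /= Gxy ltnS al_le.
Qed.

End Cuts.

Section SuffixPacking.

Variables (VH V : finType) (H : rel VH) (G : rel V) (s : ordering V) (c : nat).
Hypotheses (Hirr : simple_digraph H) (Hsc : strongly_connected H) (Harc : has_arc H).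
Hypotheses (s_inj : injective s) (s_width : width G s <= c).

Lemma disjoint_copies_in_suffix m a :
  (forall F : {set V * V}, F \subset arcs G -> #|F| <= 2 * m * c ->
     copy_in H (del_arcs G F) (fun x => a <= s x)) ->
  disjoint_copies_in H G m.+1 (fun x => a <= s x).
Proof.
elim: m a => [|m IHm] a hit;
  (have copy_a : copy_in H G (fun x => a <= s x)
     by apply: copy_in_mono (@del_arcs_subrel _ G set0) _ (hit _ (sub0set _) _);
        rewrite ?cards0);
  first exact: disjoint_copies_in1.
pose below b := copy_in H G (fun x => a <= s x < b).
have [b [no_below_b below_b1]] : exists b, ~ below b /\ below b.+1.
  apply: (@exists_flip below #|V|).
    by case/(copy_in_two_vertices Hirr Harc) => x [y [_ /andP[_]]].
  by apply: copy_in_mono copy_a => [x y|x ->] //=; rewrite ltn_ord.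
have a_le_b : a <= b.
  by case/(copy_in_two_vertices Hirr Harc): below_b1 => x [y [_ /andP[]]]; lia.
apply: (disjoint_copies_in_cons _ _ _ below_b1 (IHm b.+1 _)).
- by move=> x /andP[_]; rewrite ltnNge => /negP.
- by move=> x /andP[].
- by move=> x; apply: leq_trans; apply: leqW.
move=> F' F'_arcs F'_card.
set F := F' :|: cut G s b.+1 :|: cut G s b.
have cut_b1F : cut G s b.+1 \subset F.
  by apply/subsetP => e e_cut; rewrite !in_setU e_cut !orbT.
have cut_bF : cut G s b \subset F.
  by apply/subsetP => e e_cut; rewrite !in_setU e_cut !orbT.
have copy_F : copy_in H (del_arcs G F) (fun x => a <= s x).
  apply: hit; first by rewrite !subUset F'_arcs !cut_subset_arcs.
  have cardU (A B : {set V * V}) : #|A :|: B| <= #|A| + #|B| := leq_card_setU A B.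
  have := cardU (F' :|: cut G s b.+1) (cut G s b); have := cardU F' (cut G s b.+1).
  have := card_cut_le_width G s b; have := card_cut_le_width G s b.+1.
  rewrite /F; nia.
case/(copy_in_split Hsc (del_cut_suffix_closed cut_b1F)): copy_F => [above | ].
  apply: copy_in_mono above => [x y /andP[Gxy xyF]|x /andP[] //].
  by rewrite /del_arcs Gxy; apply: contra xyF; rewrite /F !inE => ->.
case/(copy_in_split Hsc (del_cut_suffix_closed cut_bF)) => [at_b | below_b]; last first.
  case: no_below_b; apply: copy_in_mono below_b => [|x /= /andP[/andP[-> _]]].
    exact: del_arcs_subrel.
  by rewrite ltnNge.
case/(copy_in_two_vertices Hirr Harc): at_b => x [y [xy]].
move=> /andP[/andP[_ /negP x_le] x_ge] /andP[/andP[_ /negP y_le] y_ge].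
by case/negP: xy; apply/eqP/s_inj/ord_inj; lia.
Qed.

End SuffixPacking.

Theorem lemma17 (VH : finType) (H : rel VH) (k c : nat)
    (VT : finType) (T : rel VT) :
  simple_digraph H -> strongly_connected H -> has_arc H ->
  0 < k ->
  tournament T ->
  ctw T <= c ->
  ~ k_disjoint_immersions k H T ->
  exists F : {set VT * VT},
    [/\ F \subset arcs T,
        #|F| <= 2 * (k - 1) * c &
        ~ contains_immersion H (del_arcs T F)].
Proof.
move=> Hirr Hsc Harc k_gt0 _ ctw_le no_packing.
have [s s_inj s_width] := ctw_ordering T.
apply: NNPP => no_hitting_set; apply: no_packing.
apply: (k_disjoint_immersions_of (S := fun x => 0 <= s x)).
rewrite -(prednK k_gt0) -subn1.
apply: (disjoint_copies_in_suffix (c := c)) => //; first by rewrite s_width.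
move=> F F_arcs F_card; apply: NNPP => no_copy; apply: no_hitting_set.
by exists F; split=> // -[phi [P copyP]]; apply: no_copy; exists phi, P.
Qed.
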